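(* Let $\mathcal{G}$ be an unambiguous weighted context-free grammar with positive weight vector $\omega$, generating $\mathcal{L}$, and let $n\ge0$. Let $P_{n,\omega,k}\in[0,1]$ be the total probability (under the $\omega$-weighted distribution on $\mathcal{L}_n$) of the set of distinct words obtained after $k$ independent draws from that distribution. Then \[ E[P_{n,\omega,k}]=\sum_{i=1}^{|\mathbf{W}_n|} M_{n,i}\,\frac{W_{n,i}}{Z_\omega(n)}\left(1-\left(1-\frac{W_{n,i}}{Z_\omega(n)}\right)^k\right). \] Moreover, if Condition C1 holds, then there exists $\beta>1$ such that for any $k\in o(\beta^n)$, \[ E[P_{n,\omega,k}]=k\,\alpha_{2,n}\left(1+O(\beta^{-n})\right). \]
   Context: A weighted context-free grammar is an unambiguous context-free grammar with terminal alphabet $\Sigma$ and positive weights $\omega=(\omega_t)_{t\in\Sigma}$; $\mathcal{L}_n$ is the set of generated words of length $n$. The weight $\omega(w)$ of a word is the product of its letters' weights (with multiplicity); $Z_\omega(n)=\sum_{w\in\mathcal{L}_n}\omega(w)$, and the $\omega$-weighted distribution gives $w$ probability $\omega(w)/Z_\omega(n)$. $\mathbf{W}_n=(W_{n,1}<W_{n,2}<\dots)$ is the increasingly ordered vector of distinct weights of words in $\mathcal{L}_n$ and $M_{n,i}$ the number of words of weight $W_{n,i}$. $\alpha_{2,n}=\sum_{w\in\mathcal{L}_n}(\omega(w)/Z_\omega(n))^2$. Condition C1: there exists $\beta>1$ such that $\max_{w\in\mathcal{L}_n}\omega(w)/Z_\omega(n)\in O(\beta^{-n})$. *)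

From mathcomp Require Import all_boot all_order all_algebra.
From mathcomp Require Import boolp.
Set Implicit Arguments. Unset Strict Implicit. Unset Printing Implicit Defensive.
Import Order.TTheory GRing.Theory Num.Theory.
Local Open Scope ring_scope.

(* Terminal alphabet Sig, nonterminals N (both finite). A rule X -> s is a pair
   (X, s) with s a sequence of terminals (inl) and nonterminals (inr). *)
Record cfg (Sig N : finType) := CFG {
  cfg_start : N;
  cfg_rules : seq (N * seq (Sig + N))
}.

Inductive dtree (Sig N : Type) :=
| DLeaf of Sig
| DNode of N & seq (dtree Sig N).

Section Grammar.
Variables (Sig N : finType) (G : cfg Sig N).

Definition droot (t : dtree Sig N) : Sig + N :=
  match t with DLeaf a => inl a | DNode X _ => inr X end.

Fixpoint dyield (t : dtree Sig N) : seq Sig :=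
  match t with
  | DLeaf a => [:: a]
  | DNode _ ts => flatten (map dyield ts)
  end.

Fixpoint dvalid (t : dtree Sig N) : Prop :=
  match t with
  | DLeaf _ => True
  | DNode X ts =>
      (X, map droot ts) \in cfg_rules G /\ foldr (fun u P => dvalid u /\ P) True ts
  end.

Definition full_tree (t : dtree Sig N) : Prop :=
  droot t = inr (cfg_start G) /\ dvalid t.

Definition generates (w : seq Sig) : Prop :=
  exists t, full_tree t /\ dyield t = w.

Definition unambiguous : Prop :=
  forall t1 t2, full_tree t1 -> full_tree t2 -> dyield t1 = dyield t2 -> t1 = t2.

Definition Lang (n : nat) : {set n.-tuple Sig} :=
  [set w : n.-tuple Sig | `[< generates (tval w) >]].
End Grammar.

Section Weighted.
Variables (R : realFieldType) (Sig N : finType) (G : cfg Sig N) (om : Sig -> R).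

Definition wword (n : nat) (w : n.-tuple Sig) : R := \prod_(a <- w) om a.
Arguments wword : clear implicits.

Definition Zw (n : nat) : R := \sum_(w in Lang G n) wword n w.

Definition prob (n : nat) (w : n.-tuple Sig) : R := wword n w / Zw n.
Arguments prob : clear implicits.

Definition Wvec (n : nat) : seq R :=
  sort <=%R (undup [seq wword n w | w <- enum (Lang G n)]).

(* M_{n,i} : number of words of L_n with weight W_{n,i} (0-based index i) *)
Definition Mcount (n i : nat) : nat :=
  #|[set w in Lang G n | wword n w == nth 0 (Wvec n) i]|.

Definition alpha2 (n : nat) : R := \sum_(w in Lang G n) prob n w ^+ 2.

(* max_{w in L_n} omega(w)/Z_omega(n) (0 if L_n is empty) *)
Definition maxprob (n : nat) : R := \big[Num.max/0]_(w in Lang G n) prob n w.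

(* E[P_{n,omega,k}]: k independent draws s(0),...,s(k-1) from the weighted
   distribution on L_n; P = total probability of the set of distinct words drawn. *)
Definition covered (n k : nat) (s : {ffun 'I_k -> n.-tuple Sig}) : R :=
  \sum_(w in Lang G n | [exists i, s i == w]) prob n w.

Definition EP (n k : nat) : R :=
  \sum_(s : {ffun 'I_k -> n.-tuple Sig} | [forall i, s i \in Lang G n])
     (\prod_(i < k) prob n (s i)) * covered s.

Definition condC1 : Prop :=
  exists beta : R, 1 < beta /\
    exists C : R, exists N0 : nat, forall n, (N0 <= n)%N -> maxprob n <= C * beta ^- n.
End Weighted.

From mathcomp Require Import all_boot all_order all_algebra.
From mathcomp Require Import boolp.
From mathcomp Require Import ring lra.
Set Implicit Arguments. Unset Strict Implicit. Unset Printing Implicit Defensive.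
Import Order.TTheory GRing.Theory Num.Theory.
Local Open Scope ring_scope.

(* By linearity over words, a word of probability p is hit by k independent
   draws with probability 1 - (1 - p)^k, and grouping the words by weight gives
   the exact formula.  Since kp - (kp)^2 <= 1 - (1 - p)^k <= kp, the expectation
   is k alpha_2 up to a relative error k * max_w p_w; under C1 with k = o(b^n)
   for some 1 < b with b^2 <= beta, this is O(b^-n). *)

Lemma sum_comp_by_value (T : finType) (V : eqType) (M : nmodType)
    (A : {set T}) (f : T -> V) (F : V -> M) (s : seq V) :
  perm_eq s (undup [seq f x | x <- enum A]) ->
  \sum_(x in A) F (f x) = \sum_(v <- s) F v *+ #|[set x in A | f x == v]|.
Proof.
move=> /(perm_big _) ->; set u := undup _.
transitivity (\sum_(v <- u) \sum_(x in A | f x == v) F (f x)); last first.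
  apply: eq_bigr => v _; rewrite -sumr_const.
  by apply: eq_big => [x|x /andP[_ /eqP ->]]; rewrite ?inE.
under [RHS]eq_bigr => v _ do rewrite big_mkcondr /=.
rewrite exchange_big /=; apply: eq_bigr => x Ax; rewrite -big_mkcond -big_filter.
have -> : [seq v <- u | f x == v] = [:: f x].
  rewrite (eq_filter (a2 := pred1 (f x))) => [|v]; last by rewrite /= eq_sym.
  apply: filter_pred1_uniq; first exact: undup_uniq.
  by rewrite mem_undup map_f ?mem_enum.
by rewrite big_seq1.
Qed.

Lemma one_sub_expn_bounds (R : realDomainType) (p : R) k : 0 <= p -> p <= 1 ->
  k%:R * p - (k%:R * p) ^+ 2 <= 1 - (1 - p) ^+ k <= k%:R * p.
Proof.
move=> p_ge0 p_le1.
suff /andP[lb ub] : 1 - k%:R * p <= (1 - p) ^+ k <= 1 - k%:R * p + (k%:R * p) ^+ 2.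
  by apply/andP; split; lra.
elim: k => [|k /andP[lb ub]]; first by rewrite expr0 mul0r subr0 expr0n addr0 lexx.
have k_ge0 : 0 <= k%:R :> R by rewrite ler0n.
rewrite exprS -natr1; set X := (1 - p) ^+ k in lb ub *.
have h1 : 0 <= (1 - p) * (X - (1 - k%:R * p)) by rewrite mulr_ge0 ?subr_ge0.
have h2 : 0 <= (1 - p) * (1 - k%:R * p + (k%:R * p) ^+ 2 - X).
  by rewrite mulr_ge0 ?subr_ge0.
have h3 : 0 <= k%:R * k%:R * (p * p) * p by rewrite !mulr_ge0.
have h4 : 0 <= k%:R * p * p by rewrite !mulr_ge0.
apply/andP; split; nra.
Qed.

Lemma cover_term_approx (R : realDomainType) (p m : R) k :
  0 <= p -> p <= 1 -> p <= m ->
  `|p * (1 - (1 - p) ^+ k) - k%:R * p ^+ 2| <= k%:R ^+ 2 * m * p ^+ 2.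
Proof.
move=> p_ge0 p_le1 p_le_m; have /andP[lb ub] := one_sub_expn_bounds k p_ge0 p_le1.
set Y := 1 - (1 - p) ^+ k in lb ub *.
have h1 : 0 <= p * (Y - (k%:R * p - (k%:R * p) ^+ 2)) by rewrite mulr_ge0 ?subr_ge0.
have h2 : 0 <= p * (k%:R * p - Y) by rewrite mulr_ge0 ?subr_ge0.
have h3 : 0 <= k%:R ^+ 2 * p ^+ 2 * (m - p) by rewrite !mulr_ge0 ?subr_ge0 ?ler0n.
rewrite ler_norml; apply/andP; split; nra.
Qed.

Lemma exists_sqr_le (R : realFieldType) (beta : R) :
  1 < beta -> exists2 b : R, 1 < b & b ^+ 2 <= beta.
Proof.
move=> beta_gt1; have den_gt0 : 0 < beta + 1 by lra.
exists (2 * beta / (beta + 1)).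
  by rewrite ltr_pdivlMr // mul1r; lra.
rewrite expr_div_n ler_pdivrMr ?exprn_gt0 //.
have : 0 <= beta * (beta - 1) ^+ 2 by rewrite mulr_ge0 ?sqr_ge0 //; lra.
nra.
Qed.

(* For [a = 0] the bound forces [E = 0], and [(E - a) / a = 0] since [x / 0 = 0]. *)
Lemma relative_error (R : realFieldType) (E a e : R) :
  0 <= a -> 0 <= e -> `|E - a| <= e * a ->
  E = a * (1 + (E - a) / a) /\ `|(E - a) / a| <= e.
Proof.
move=> a_ge0 e_ge0; have [->|a_neq0] := eqVneq a 0.
  by rewrite mulr0 subr0 normr_le0 invr0 mulr0 normr0 => /eqP ->; rewrite mul0r.
move=> err; have a_gt0 : 0 < a by rewrite lt_def a_neq0.
split; first by rewrite mulrDr mulr1 mulrCA divff // mulr1 addrC subrK.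
by rewrite normrM normfV [`|a|]gtr0_norm // ler_pdivrMr.
Qed.

Lemma le_mul_div_sqr (R : realFieldType) (K m c y z : R) :
  0 < y -> y ^+ 2 <= z -> 0 <= K -> K <= y -> 0 <= m -> m <= c / z -> K * m <= c / y.
Proof.
move=> y_gt0 y2_le_z K_ge0 K_le_y m_ge0 m_le.
have z_gt0 : 0 < z by apply: lt_le_trans y2_le_z; rewrite exprn_gt0.
have -> : c = c / z * z by rewrite divfK ?gt_eqF.
have q_ge0 : 0 <= c / z := le_trans m_ge0 m_le.
apply: le_trans (ler_pM K_ge0 m_ge0 K_le_y m_le) _.
rewrite ler_pdivlMr //; nra.
Qed.

Section Coverage.
Variables (R : comPzRingType) (T : finType) (p : T -> R) (k : nat).

Lemma sum_ffun_on_prod (A : {set T}) :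
  \sum_(s : {ffun 'I_k -> T} | [forall i, s i \in A]) \prod_(i < k) p (s i)
  = (\sum_(x in A) p x) ^+ k.
Proof.
rewrite -[k in RHS]card_ord -prodr_const bigA_distr_big; apply: eq_bigl => s.
by apply/ffun_onP/forallP.
Qed.

Lemma sum_ffun_on_prod_hit (A : {set T}) w : w \in A ->
  \sum_(s : {ffun 'I_k -> T} | [forall i, s i \in A] && [exists i, s i == w])
     \prod_(i < k) p (s i)
  = (\sum_(x in A) p x) ^+ k - (\sum_(x in A) p x - p w) ^+ k.
Proof.
move=> Aw; have -> : \sum_(x in A) p x - p w = \sum_(x in A :\ w) p x.
  by rewrite (big_setD1 w Aw) addrC addKr.
rewrite -!sum_ffun_on_prod.
rewrite [X in _ = X - _](bigID (fun s : {ffun _ -> T} => [exists i, s i == w])) /=.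
rewrite [X in _ = _ + X - _](eq_bigl (fun s : {ffun _ -> T} => [forall i, s i \in A :\ w])).
  by rewrite addrK.
move=> s.
apply/andP/forallP => [[/forallP inA /existsPn missw] i | inAw].
  by rewrite in_setD1 inA andbT missw.
split; first by apply/forallP => i; have /setD1P[] := inAw i.
by apply/existsPn => i; have /setD1P[] := inAw i.
Qed.

Lemma expected_cover_mass (A : {set T}) :
  \sum_(s : {ffun 'I_k -> T} | [forall i, s i \in A])
     (\prod_(i < k) p (s i)) * \sum_(w in A | [exists i, s i == w]) p w
  = \sum_(w in A) p w * ((\sum_(x in A) p x) ^+ k - (\sum_(x in A) p x - p w) ^+ k).
Proof.
under eq_bigr => s _ do rewrite big_mkcondr /= big_distrr /=.
rewrite exchange_big /=; apply: eq_bigr => w Aw.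
rewrite -sum_ffun_on_prod_hit // big_distrr /= [RHS]big_mkcondr /=.
by apply: eq_bigr => s _; case: ifP; rewrite ?mulr0 ?mulr1 // mulrC.
Qed.
End Coverage.

Section WeightedLanguage.
Variables (R : realFieldType) (Sig N : finType) (G : cfg Sig N) (om : Sig -> R).
Hypothesis om_pos : forall a, 0 < om a.
Variable n : nat.

Lemma wword_gt0 (w : n.-tuple Sig) : 0 < wword om w.
Proof. exact: prodr_gt0. Qed.

Lemma Zw_gt0 (w : n.-tuple Sig) : w \in Lang G n -> 0 < Zw G om n.
Proof.
move=> wL; rewrite /Zw (bigD1 w) //= ltr_pwDl ?wword_gt0 //.
by apply: sumr_ge0 => x _; apply/ltW/wword_gt0.
Qed.

Lemma sum_prob (w : n.-tuple Sig) : w \in Lang G n ->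
  \sum_(x in Lang G n) prob G om x = 1.
Proof. by move=> wL; rewrite /prob -mulr_suml divff // gt_eqF // (Zw_gt0 wL). Qed.

Lemma prob_gt0 (w : n.-tuple Sig) : w \in Lang G n -> 0 < prob G om w.
Proof. by move=> wL; rewrite divr_gt0 ?wword_gt0 ?(Zw_gt0 wL). Qed.

Lemma prob_le1 (w : n.-tuple Sig) : w \in Lang G n -> prob G om w <= 1.
Proof.
move=> wL; rewrite -(sum_prob wL) (bigD1 w) //= lerDl.
by apply: sumr_ge0 => x /andP[xL _]; apply/ltW/prob_gt0.
Qed.

Lemma prob_le_maxprob (w : n.-tuple Sig) : w \in Lang G n -> prob G om w <= maxprob G om n.
Proof. by move=> wL; apply: (le_bigmax_cond _ (P := fun x => x \in Lang G n)). Qed.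

Lemma alpha2_ge0 : 0 <= alpha2 G om n.
Proof. by apply: sumr_ge0 => w _; apply: sqr_ge0. Qed.

Lemma maxprob_ge0 : 0 <= maxprob G om n.
Proof.
elim/big_ind: (maxprob G om n) => //; first by move=> x y; rewrite le_max => ->.
by move=> w wL; apply/ltW/prob_gt0.
Qed.

Lemma sum_Lang_by_weight (g : R -> R) :
  \sum_(w in Lang G n) g (wword om w) =
  \sum_(i < size (Wvec G om n)) (Mcount G om n i)%:R * g (nth 0 (Wvec G om n) i).
Proof.
rewrite (sum_comp_by_value g (permEl (perm_sort <=%R _))) (big_nth 0) big_mkord.
by apply: eq_bigr => i _; rewrite mulr_natl.
Qed.

Lemma EP_word_sum k :
  EP G om n k = \sum_(w in Lang G n) prob G om w * (1 - (1 - prob G om w) ^+ k).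
Proof.
rewrite /EP /covered expected_cover_mass; apply: eq_bigr => w wL.
by rewrite (sum_prob wL) expr1n.
Qed.

Lemma EP_alpha2_error k :
  `|EP G om n k - k%:R * alpha2 G om n| <= k%:R ^+ 2 * maxprob G om n * alpha2 G om n.
Proof.
rewrite EP_word_sum /alpha2 !mulr_sumr -sumrB.
apply: le_trans (ler_norm_sum _ _ _) _; apply: ler_sum => w wL.
apply: cover_term_approx; rewrite ?prob_le1 ?prob_le_maxprob //.
exact/ltW/prob_gt0.
Qed.
End WeightedLanguage.

Theorem theorem4 (R : realFieldType) (Sig N : finType) (G : cfg Sig N)
    (om : Sig -> R) (om_pos : forall a, 0 < om a) (G_unamb : unambiguous G) :
  (forall n k : nat,
     EP G om n k =
     \sum_(i < size (Wvec G om n))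
        (Mcount G om n i)%:R * (nth 0 (Wvec G om n) i / Zw G om n) *
        (1 - (1 - nth 0 (Wvec G om n) i / Zw G om n) ^+ k))
  /\
  (condC1 G om ->
   exists beta : R, 1 < beta /\
     forall k : nat -> nat,
       (* k in o(beta^n) *)
       (forall eps : R, 0 < eps ->
          exists N0 : nat, forall n, (N0 <= n)%N -> (k n)%:R <= eps * beta ^+ n) ->
       (* E[P] = k alpha_2 (1 + O(beta^-n)) *)
       exists (h : nat -> R) (C : R) (N0 : nat),
         forall n, (N0 <= n)%N ->
           `|h n| <= C * beta ^- n /\
           EP G om n (k n) = (k n)%:R * alpha2 G om n * (1 + h n)).
Proof.
split.
  move=> n k; pose g v := v / Zw G om n * (1 - (1 - v / Zw G om n) ^+ k).
  rewrite EP_word_sum // (sum_Lang_by_weight G om n g).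
  by apply: eq_bigr => i _; rewrite /g [LHS]mulrA.
move=> [beta [beta_gt1 [C [N0 maxprob_small]]]].
have [b b_gt1 b2_le_beta] := exists_sqr_le beta_gt1; have b_gt0 : 0 < b by lra.
exists b; split=> // k k_small; have [N1 k_le] := k_small 1 ltr01.
pose a n := (k n)%:R * alpha2 G om n.
exists (fun n => (EP G om n (k n) - a n) / a n), `|C|, (maxn N0 N1) => n.
rewrite geq_max => /andP[n_ge_N0 n_ge_N1].
have km_small : (k n)%:R * maxprob G om n <= `|C| / b ^+ n.
  apply: (le_mul_div_sqr (z := beta ^+ n)); rewrite ?exprn_gt0 ?ler0n ?maxprob_ge0 //.
  - by rewrite -exprM mulnC exprM lerXn2r // ?nnegrE ?exprn_ge0; lra.
  - by rewrite -[b ^+ n]mul1r k_le.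
  - apply: le_trans (maxprob_small n n_ge_N0) _.
    by rewrite ler_wpM2r ?ler_norm // invr_ge0 exprn_ge0 //; lra.
have err : `|EP G om n (k n) - a n| <= (k n)%:R * maxprob G om n * a n.
  have -> : (k n)%:R * maxprob G om n * a n =
            (k n)%:R ^+ 2 * maxprob G om n * alpha2 G om n by rewrite /a; ring.
  exact: EP_alpha2_error.
have [EP_eq h_small] := relative_error (mulr_ge0 (ler0n _ _) (alpha2_ge0 G om n))
  (mulr_ge0 (ler0n _ _) (maxprob_ge0 G om_pos n)) err.
by split; [apply: le_trans km_small | rewrite {1}EP_eq].
Qed.
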